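(* Let $\alpha>1$ and $f\in\mathcal{B}_1(\alpha)$. Then for every $r\in(0,1)$ and all real $\theta_1<\theta_2$, writing $z=re^{i\theta}$, \[ \int_{\theta_1}^{\theta_2}\left[\operatorname{Re}\left(1+\frac{zf''(z)}{f'(z)}\right)+(\alpha-1)\operatorname{Re}\left(\frac{zf'(z)}{f(z)}\right)\right]d\theta>-\pi, \] i.e. $\int_{\theta_1}^{\theta_2}\operatorname{Re}P[\alpha,f](re^{i\theta})\,d\theta>-\pi$.
   Context: $\mathbb{D}$ is the unit disk, $\mathcal{A}$ the class of analytic $f$ in $\mathbb{D}$ with $f(z)=z+\sum_{n\ge2}a_nz^n$, and $\mathcal{P}$ the class of analytic $h$ in $\mathbb{D}$ with $h(0)=1$, $\operatorname{Re}h>0$. For $\alpha>0$, $\mathcal{B}_1(\alpha)$ is the class of functions $f(z)=\left[\alpha\int_0^z t^{\alpha-1}h(t)\,dt\right]^{1/\alpha}$ with $h\in\mathcal{P}$ (principal powers), equivalently $f\in\mathcal{A}$ with $\operatorname{Re}\left[\left(\frac{f(z)}{z}\right)^{\alpha-1}f'(z)\right]>0$ in $\mathbb{D}$. For $f\in\mathcal{A}$, $P[\alpha,f](z)=1+\frac{zf''(z)}{f'(z)}+(\alpha-1)\frac{zf'(z)}{f(z)}$. *)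

From Stdlib Require Import Reals.
From Coquelicot Require Import Coquelicot.
Open Scope R_scope.

Definition Cexp (z : C) : C :=
  (exp (Re z) * cos (Im z), exp (Re z) * sin (Im z)).

(* Principal argument, with values in (-PI, PI]. *)
Definition Carg (z : C) : R :=
  let x := Re z in let y := Im z in
  if Rlt_dec 0 x then atan (y / x)
  else if Rlt_dec x 0 then
    (if Rle_dec 0 y then atan (y / x) + PI else atan (y / x) - PI)
  else if Rlt_dec 0 y then PI / 2
  else if Rlt_dec y 0 then - (PI / 2)
  else 0.

Definition Clog (z : C) : C := (ln (Cmod z), Carg z).

(* Principal power w^p for a real exponent p (0^p := 0). *)
Definition Cpow (w : C) (p : R) : C :=
  if Req_EM_T (Cmod w) 0 then RtoC 0 else Cexp (Cmult (RtoC p) (Clog w)).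

(* Real power s^p for s > 0 (and 0 for s <= 0; used only for s in [0,1], p > 0). *)
Definition rpow (s p : R) : R := if Rlt_dec 0 s then Rpower s p else 0.

Definition inD (z : C) : Prop := Cmod z < 1.

Definition analytic_D (f : C -> C) : Prop :=
  forall z : C, inD z -> ex_derive (K := C_AbsRing) (V := C_NormedModule) f z.

Definition classA (f : C -> C) : Prop :=
  analytic_D f /\ f (RtoC 0) = RtoC 0 /\
  is_derive (K := C_AbsRing) (V := C_NormedModule) f (RtoC 0) (RtoC 1).

Definition classP (h : C -> C) : Prop :=
  analytic_D h /\ h (RtoC 0) = RtoC 1 /\ (forall z, inD z -> 0 < Re (h z)).

(* B_1(alpha): f(z) = [alpha int_0^z t^(alpha-1) h(t) dt]^(1/alpha).
   Parametrising the segment t = s z (s in [0,1]) gives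
   alpha int_0^z t^(alpha-1) h(t) dt = z^alpha * g(z) with
   g(z) = alpha int_0^1 s^(alpha-1) h(s z) ds  (Re g > 0, g(0) = 1),
   and the analytic branch of the 1/alpha power is f(z) = z * g(z)^(1/alpha)
   with the principal power of g(z). *)
Definition Bazilevic_g (alpha : R) (h : C -> C) (z : C) : C :=
  Cmult (RtoC alpha)
    (RInt (V := C_R_CompleteNormedModule)
       (fun s : R => Cmult (RtoC (rpow s (alpha - 1))) (h (Cmult (RtoC s) z)))
       0 1).

Definition classB1 (alpha : R) (f : C -> C) : Prop :=
  classA f /\
  exists h : C -> C, classP h /\
    forall z, inD z -> f z = Cmult z (Cpow (Bazilevic_g alpha h z) (/ alpha)).

Definition Pfun (alpha : R) (f f' f'' : C -> C) (z : C) : C :=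
  Cplus (Cplus (RtoC 1) (Cdiv (Cmult z (f'' z)) (f' z)))
        (Cmult (RtoC (alpha - 1)) (Cdiv (Cmult z (f' z)) (f z))).

(* Write f(z) = z g(z)^(1/alpha) with g(z) = alpha int_0^1 s^(alpha-1) h(s z) ds, so that Re g > 0.
   The quotient q = f(z)/z then has |arg q| < pi/(2 alpha), hence g = q^alpha on the whole disk, and
   differentiating t^alpha g(t z) = alpha int_0^t s^(alpha-1) h(s z) ds at t = 1 gives h = f' q^(alpha-1).
   Along z = r e^(i theta), Re P[alpha, f](z) is therefore the derivative of alpha theta + arg h(z), and
   since Re h > 0 this argument stays in (-pi/2, pi/2): the integral over [theta1, theta2] is at least
   alpha (theta2 - theta1) - pi > -pi. *)

From Pilot Require Import Defs.
From Stdlib Require Import Reals Lra Psatz Classical ClassicalEpsilon.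
From Coquelicot Require Import Coquelicot.
Open Scope R_scope.

Lemma RInt_not_ex (F : R -> R) (a b : R) : ~ ex_RInt F a b -> RInt F a b = 0.
Proof.
intros HnI. unfold RInt, iota, lim; simpl. unfold R_complete_lim.
rewrite (Lub_Rbar_eqset _ (fun _ => True)).
- rewrite (is_lub_Rbar_unique _ p_infty); [reflexivity|]. split.
  + intros x _. exact I.
  + intros [l| |] Hl; simpl; auto.
    * specialize (Hl (l + 1) I). simpl in Hl. lra.
    * exact (Hl 0 I).
- intros x; split; auto. intros _ y Hy. exfalso. apply HnI. exists y. exact Hy.
Qed.

Section Antiderivative.

Variables (G F : R -> R) (a b : R).
Hypothesis G_derive : forall x, a <= x <= b -> is_derive G x (F x).

Lemma mvt_point_ex (x y : R) :
  exists c, x <= y -> x <= c <= y /\ (a <= x -> y <= b -> G y - G x = F c * (y - x)).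
Proof.
destruct (Rle_dec x y) as [Hxy|Hxy]; [|exists x; lra].
destruct (Rle_dec a x) as [Hax|Hax]; [|exists x; lra].
destruct (Rle_dec y b) as [Hyb|Hyb]; [|exists x; lra].
destruct (MVT_gen G x y F) as [c [Hc HG]].
- intros t Ht. apply G_derive.
  rewrite Rmin_left, Rmax_right in Ht by lra. lra.
- intros t Ht. apply continuity_pt_filterlim.
  apply (ex_derive_continuous (V := R_NormedModule)).
  rewrite Rmin_left, Rmax_right in Ht by lra.
  eexists; apply G_derive; lra.
- exists c. intros _. rewrite Rmin_left, Rmax_right in Hc by lra. auto.
Qed.

(* A tag given by the mean value theorem makes every Riemann sum of F telescope. *)
Definition mvt_point (x y : R) : R :=
  proj1_sig (constructive_indefinite_description _ (mvt_point_ex x y)).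

Lemma mvt_point_spec (x y : R) : x <= y ->
  x <= mvt_point x y <= y /\ (a <= x -> y <= b -> G y - G x = F (mvt_point x y) * (y - x)).
Proof. unfold mvt_point. destruct constructive_indefinite_description as [c Hc]. exact Hc. Qed.

Lemma Riemann_sum_mvt_point (x0 : R) (l : list R) :
  sorted Rle (x0 :: l) -> a <= x0 -> seq.last x0 l <= b ->
  Riemann_sum F (SF_seq_f2 mvt_point (x0 :: l)) = G (seq.last x0 l) - G x0.
Proof.
revert x0; induction l as [|x1 l IH]; intros x0 Hs Hax0 Hlast.
- unfold Riemann_sum; simpl. rewrite Rminus_eq_0. reflexivity.
- destruct Hs as [H01 Hl].
  assert (Hx1 : x1 <= seq.last x1 l) by exact (sorted_last (x1 :: l) 0 Hl (Nat.lt_0_succ _) x1).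
  rewrite SF_cons_f2 by apply Nat.lt_0_succ.
  rewrite Riemann_sum_cons, (IH x1 Hl) by (simpl in Hlast; lra).
  destruct (mvt_point_spec x0 x1 H01) as [_ E]. simpl in Hlast. specialize (E Hax0 ltac:(lra)).
  simpl. change ((x1 - x0) * F (mvt_point x0 x1) + (G (seq.last x1 l) - G x1) =
                 G (seq.last x1 l) - G x0).
  lra.
Qed.

Lemma Riemann_sum_unif_part (n : nat) :
  a <= b -> Riemann_sum F (SF_seq_f2 mvt_point (unif_part a b n)) = G b - G a.
Proof.
intros Hab. set (l := unif_part a b n).
assert (Hl : l = (a :: seq.behead l)%list).
{ rewrite <- (head_unif_part 0 a b n). reflexivity. }
assert (Hlast : seq.last a (seq.behead l) = b).
{ change (seq.last 0 (a :: seq.behead l) = b). rewrite <- Hl. apply last_unif_part. }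
rewrite Hl, Riemann_sum_mvt_point, Hlast; [reflexivity | | apply Rle_refl | lra].
rewrite <- Hl. apply unif_part_sort, Hab.
Qed.

Lemma is_RInt_antiderivative (I : R) : a < b -> is_RInt F a b I -> I = G b - G a.
Proof.
intros Hab HI.
apply Rminus_diag_uniq, Rabs_eq_0.
apply Rle_antisym; [|apply Rabs_pos].
apply le_epsilon; intros e He. rewrite Rplus_0_l.
destruct (HI _ (locally_ball I (mkposreal e He))) as [d Hd].
destruct (seq_step_unif_part_ex a b d) as [n Hn].
destruct (Riemann_fine_unif_part mvt_point a b n) as [_ [Hptd [Hhead Hlast]]].
{ intros x y Hxy. apply (mvt_point_spec x y Hxy). }
{ lra. }
assert (Hlx : SF_lx (SF_seq_f2 mvt_point (unif_part a b n)) = unif_part a b n).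
{ apply SF_lx_f2. unfold unif_part. rewrite seq.size_mkseq. apply Nat.lt_0_succ. }
specialize (Hd (SF_seq_f2 mvt_point (unif_part a b n))).
refine (Rlt_le _ _ (_ (Hd _ _))).
- unfold ball; simpl; unfold AbsRing_ball, abs, minus, plus, opp; simpl.
  rewrite sign_eq_1, Rmult_1_l, Riemann_sum_unif_part by lra.
  rewrite Rabs_minus_sym. exact (fun H => H).
- simpl. rewrite Hlx. exact Hn.
- rewrite Rmin_left, Rmax_right by lra. auto.
Qed.

End Antiderivative.

Definition is_derive_RC (u : R -> C) (t : R) (d : C) : Prop :=
  is_derive (fun s => fst (u s)) t (fst d) /\ is_derive (fun s => snd (u s)) t (snd d).

Lemma is_derive_val (f : R -> R) (x d d' : R) : is_derive f x d -> d = d' -> is_derive f x d'.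
Proof. intros H <-; exact H. Qed.

Lemma is_derive_RC_ext (u v : R -> C) (t : R) (d d' : C) :
  (forall s, u s = v s) -> is_derive_RC u t d -> d = d' -> is_derive_RC v t d'.
Proof.
intros E [H1 H2] <-.
split; [apply (is_derive_ext (fun s => fst (u s))) | apply (is_derive_ext (fun s => snd (u s)))];
  try assumption; intros s; rewrite E; reflexivity.
Qed.

Lemma is_derive_RC_ext_loc (u v : R -> C) (t : R) (d : C) :
  locally t (fun s => u s = v s) -> is_derive_RC u t d -> is_derive_RC v t d.
Proof.
intros E [H1 H2].
split; [apply (is_derive_ext_loc (fun s => fst (u s))) | apply (is_derive_ext_loc (fun s => snd (u s)))];
  try assumption; apply (filter_imp _ _ (fun s (Es : u s = v s) => f_equal _ Es) E).
Qed.

Lemma is_derive_RC_const (c : C) (t : R) : is_derive_RC (fun _ => c) t 0%C.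
Proof. split; apply (is_derive_const (K := R_AbsRing) (V := R_NormedModule)). Qed.

Lemma is_derive_RC_RtoC (f : R -> R) (t d : R) :
  is_derive f t d -> is_derive_RC (fun s => RtoC (f s)) t (RtoC d).
Proof.
intros H; split; simpl; [exact H | apply (is_derive_const (K := R_AbsRing) (V := R_NormedModule))].
Qed.

Lemma is_derive_RC_mult (u v : R -> C) (t : R) (du dv : C) :
  is_derive_RC u t du -> is_derive_RC v t dv ->
  is_derive_RC (fun s => Cmult (u s) (v s)) t (Cplus (Cmult du (v t)) (Cmult (u t) dv)).
Proof.
intros [Hu1 Hu2] [Hv1 Hv2]; split.
- refine (is_derive_val _ _ _ _ (is_derive_minus _ _ t _ _
    (is_derive_mult _ _ t _ _ Hu1 Hv1 Rmult_comm) (is_derive_mult _ _ t _ _ Hu2 Hv2 Rmult_comm)) _).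
  unfold minus, plus, opp, mult; simpl. ring.
- refine (is_derive_val _ _ _ _ (is_derive_plus _ _ t _ _
    (is_derive_mult _ _ t _ _ Hu1 Hv2 Rmult_comm) (is_derive_mult _ _ t _ _ Hu2 Hv1 Rmult_comm)) _).
  unfold plus, mult; simpl. ring.
Qed.

Lemma is_derive_RC_unique (u : R -> C) (t : R) (d d' : C) :
  is_derive_RC u t d -> is_derive_RC u t d' -> d = d'.
Proof.
intros [H1 H2] [H1' H2'].
apply is_derive_unique in H1, H2, H1', H2'.
apply injective_projections; congruence.
Qed.

Lemma is_derive_RC_filterdiff (u : R -> C) (t : R) (d : C) :
  is_derive_RC u t d <-> is_derive (V := C_R_NormedModule) u t d.
Proof.
split.
- intros [H1 H2].
  assert (H := filterdiff_comp'_2 (K := R_AbsRing) (T := AbsRing_NormedModule R_AbsRing)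
    (U := R_NormedModule) (V := R_NormedModule) (W := C_R_NormedModule)
    (fun s => fst (u s)) (fun s => snd (u s)) (fun a b => (a, b)) t _ _ (fun a b => (a, b)) H1 H2).
  refine (filterdiff_ext_lin _ _ _ (filterdiff_ext _ _ _ _ (H _)) _).
  + intros y. destruct (u y); reflexivity.
  + apply filterdiff_linear, (is_linear_prod (fun t => fst t) (fun t => snd t)).
    * apply is_linear_fst.
    * apply is_linear_snd.
  + reflexivity.
- intros H. split.
  + refine (filterdiff_ext_lin _ _ _ (filterdiff_comp' u (fun c : C_R_NormedModule => fst c) t _ _ H
      (filterdiff_linear _ (is_linear_fst (K := R_AbsRing) (U := R_NormedModule) (V := R_NormedModule)))) _).
    reflexivity.
  + refine (filterdiff_ext_lin _ _ _ (filterdiff_comp' u (fun c : C_R_NormedModule => snd c) t _ _ H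
      (filterdiff_linear _ (is_linear_snd (K := R_AbsRing) (U := R_NormedModule) (V := R_NormedModule)))) _).
    reflexivity.
Qed.

Lemma is_derive_C_filterdiff_R (f : C -> C) (w D : C) :
  is_derive (K := C_AbsRing) (V := C_NormedModule) f w D ->
  filterdiff (K := R_AbsRing) (U := C_R_NormedModule) (V := C_R_NormedModule) f
    (locally w) (fun y => Cmult y D).
Proof.
intros [_ Hd]. split.
- apply Build_is_linear.
  + intros x y. apply injective_projections; cbn; ring.
  + intros k x. apply injective_projections; cbn; ring.
  + exists (Cmod D + 1). split; [generalize (Cmod_ge_0 D); lra|].
    intros x. rewrite <- !Cmod_norm, Cmod_mult, Rmult_comm.
    apply Rmult_le_compat_r; [apply Cmod_ge_0 | lra].
- intros x Hx. apply (@is_filter_lim_locally_unique R_AbsRing C_R_NormedModule) in Hx. subst x.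
  intros eps. apply locally_C. specialize (Hd w (fun P H => H) eps).
  revert Hd; apply filter_imp. intros y Hy.
  rewrite <- !Cmod_norm. exact Hy.
Qed.

Lemma is_derive_RC_comp (f : C -> C) (u : R -> C) (t : R) (du D : C) :
  is_derive (K := C_AbsRing) (V := C_NormedModule) f (u t) D -> is_derive_RC u t du ->
  is_derive_RC (fun s => f (u s)) t (Cmult D du).
Proof.
intros Hf Hu. apply is_derive_RC_filterdiff. apply is_derive_RC_filterdiff in Hu.
refine (filterdiff_ext_lin _ _ _ (filterdiff_comp' u f t _ _ Hu (is_derive_C_filterdiff_R f _ D Hf)) _).
intros y. apply injective_projections; cbn; ring.
Qed.

Lemma is_derive_RC_Cexp (u : R -> C) (t : R) (du : C) :
  is_derive_RC u t du -> is_derive_RC (fun s => Cexp (u s)) t (Cmult (Cexp (u t)) du).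
Proof.
intros [H1 H2].
assert (Hexp := is_derive_comp exp _ t _ _ (is_derive_exp _) H1).
split.
- refine (is_derive_val _ _ _ _ (is_derive_mult _ _ t _ _ Hexp
    (is_derive_comp cos _ t _ _ (is_derive_cos _) H2) Rmult_comm) _).
  unfold Cexp, Re, Im, plus, mult, scal; simpl. unfold mult; simpl. ring.
- refine (is_derive_val _ _ _ _ (is_derive_mult _ _ t _ _ Hexp
    (is_derive_comp sin _ t _ _ (is_derive_sin _) H2) Rmult_comm) _).
  unfold Cexp, Re, Im, plus, mult, scal; simpl. unfold mult; simpl. ring.
Qed.

Lemma Re_pos_neq0 (w : C) : 0 < fst w -> w <> 0%C.
Proof. intros Hw E. rewrite E in Hw. simpl in Hw. lra. Qed.

Lemma normsq_pos (w : C) : w <> 0%C -> 0 < fst w ^ 2 + snd w ^ 2.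
Proof.
intros Hw. destruct w as [a b]; simpl.
destruct (Req_dec a 0) as [->|Ha]; [destruct (Req_dec b 0) as [->|Hb]|].
- exfalso; apply Hw; reflexivity.
- assert (0 < b ^ 2) by (apply pow2_gt_0; exact Hb). nra.
- assert (0 < a ^ 2) by (apply pow2_gt_0; exact Ha). nra.
Qed.

Lemma is_derive_normsq (u : R -> C) (t : R) (du : C) : is_derive_RC u t du ->
  is_derive (fun s => fst (u s) ^ 2 + snd (u s) ^ 2) t
    (2 * (fst (u t) * fst du + snd (u t) * snd du)).
Proof.
intros [H1 H2].
refine (is_derive_val _ _ _ _ (is_derive_plus _ _ t _ _
  (is_derive_pow _ 2 t _ H1) (is_derive_pow _ 2 t _ H2)) _).
unfold plus; simpl. ring.
Qed.

Lemma is_derive_RC_Cinv (u : R -> C) (t : R) (du : C) : u t <> 0%C -> is_derive_RC u t du ->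
  is_derive_RC (fun s => Cinv (u s)) t (Cmult (Copp du) (Cmult (Cinv (u t)) (Cinv (u t)))).
Proof.
intros Hu Hd. assert (HN := normsq_pos _ Hu). assert (HNd := is_derive_normsq _ _ _ Hd).
destruct Hd as [H1 H2]. split.
- refine (is_derive_val _ _ _ _ (is_derive_div _ _ t _ _ H1 HNd (Rgt_not_eq _ _ HN)) _).
  destruct (u t) as [a b], du as [a' b']; simpl in *. field. lra.
- refine (is_derive_val _ _ _ _
    (is_derive_div _ _ t _ _ (is_derive_opp _ _ _ H2) HNd (Rgt_not_eq _ _ HN)) _).
  destruct (u t) as [a b], du as [a' b']; simpl in *. unfold opp; simpl. field. lra.
Qed.

(* Closed form of the principal logarithm on the half-plane Re w > 0 (see Clog_eq_Clog_rhp). *)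
Definition Clog_rhp (w : C) : C := (ln (fst w ^ 2 + snd w ^ 2) / 2, atan (snd w / fst w)).

Lemma is_derive_RC_Clog_rhp (u : R -> C) (t : R) (du : C) : 0 < fst (u t) -> is_derive_RC u t du ->
  is_derive_RC (fun s => Clog_rhp (u s)) t (Cmult du (Cinv (u t))).
Proof.
intros Hu Hd.
assert (HN := normsq_pos _ (Re_pos_neq0 _ Hu)).
assert (HNd := is_derive_normsq _ _ _ Hd).
destruct Hd as [H1 H2]. split.
- refine (is_derive_val _ _ _ _
    (is_derive_div _ (fun _ => 2) t _ _ (is_derive_comp ln _ t _ _ (is_derive_ln _ HN) HNd)
      (is_derive_const (K := R_AbsRing) (V := R_NormedModule) 2 t) (Rgt_not_eq _ _ Rlt_0_2)) _).
  destruct (u t) as [a b], du as [a' b']; simpl in *.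
  unfold scal, zero; simpl; unfold mult; simpl. field. lra.
- refine (is_derive_val _ _ _ _ (is_derive_comp atan _ t _ _ (is_derive_atan _)
    (is_derive_div _ _ t _ _ H2 H1 (Rgt_not_eq _ _ Hu))) _).
  destruct (u t) as [a b], du as [a' b']; simpl in *. unfold scal; simpl; unfold mult, Rsqr; simpl.
  assert (0 < 1 + b / a * (b / a)) by (assert (0 <= b / a * (b / a)) by nra; lra).
  field. repeat split; nra.
Qed.

Lemma Cexp_plus (a b : C) : Cexp (Cplus a b) = Cmult (Cexp a) (Cexp b).
Proof.
unfold Cexp, Re, Im. destruct a as [a1 a2], b as [b1 b2]; simpl.
rewrite exp_plus, cos_plus, sin_plus.
apply injective_projections; simpl; ring.
Qed.

Lemma Cexp_neq0 (a : C) : Cexp a <> 0%C.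
Proof.
unfold Cexp, Re, Im. intros E. injection E as E1 E2.
assert (He := exp_pos (fst a)). assert (H := sin2_cos2 (snd a)). unfold Rsqr in H.
apply Rmult_integral in E1 as [E1|E1]; [lra|].
apply Rmult_integral in E2 as [E2|E2]; [lra|].
rewrite E1, E2 in H. lra.
Qed.

Lemma Clog_rhp_Cexp (v : C) : - (PI / 2) < snd v < PI / 2 -> Clog_rhp (Cexp v) = v.
Proof.
intros Hb. destruct v as [a b]; simpl in Hb. unfold Clog_rhp, Cexp, Re, Im; simpl.
assert (Hc : 0 < cos b) by (apply cos_gt_0; lra).
assert (He := exp_pos a).
apply injective_projections; simpl.
- replace (exp a * cos b * (exp a * cos b * 1) + exp a * sin b * (exp a * sin b * 1))
    with (exp (a + a) * (Rsqr (sin b) + Rsqr (cos b))) by (rewrite exp_plus; unfold Rsqr; ring).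
  rewrite sin2_cos2, Rmult_1_r, ln_exp. field.
- replace (exp a * sin b / (exp a * cos b)) with (tan b) by (unfold tan; field; lra).
  apply atan_tan. exact Hb.
Qed.

Lemma Cexp_Clog_rhp (w : C) : 0 < fst w -> Cexp (Clog_rhp w) = w.
Proof.
intros Hx. destruct w as [x y]; simpl in Hx. unfold Clog_rhp, Cexp, Re, Im; simpl.
assert (HN : 0 < x ^ 2 + y ^ 2) by nra.
assert (Hs : exp (ln (x ^ 2 + y ^ 2) / 2) = sqrt (x ^ 2 + y ^ 2)).
{ rewrite <- Rpower_sqrt by exact HN. unfold Rpower. f_equal. field. }
assert (Hq : sqrt (1 + (y / x)²) = sqrt (x ^ 2 + y ^ 2) / x).
{ replace (1 + (y / x)²) with ((x ^ 2 + y ^ 2) * (/ x)²) by (unfold Rsqr; field; lra).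
  rewrite sqrt_mult_alt, sqrt_Rsqr; [reflexivity | |lra].
  left; apply Rinv_0_lt_compat, Hx. }
assert (Hpos := sqrt_lt_R0 _ HN).
simpl in Hs, Hq, Hpos. rewrite Hs, cos_atan, sin_atan, Hq.
apply injective_projections; simpl; field; lra.
Qed.

Lemma Cexp_scal_Clog_rhp_pred (p : R) (w : C) : 0 < fst w ->
  Cexp (Cmult (RtoC p) (Clog_rhp w)) = Cmult (Cexp (Cmult (RtoC (p - 1)) (Clog_rhp w))) w.
Proof.
intros Hw. rewrite <- (Cexp_Clog_rhp w) at 3 by exact Hw.
rewrite <- Cexp_plus, RtoC_minus. f_equal. ring.
Qed.

Lemma Im_scal_Clog_rhp_bound (p : R) (w : C) : 0 < p <= 1 ->
  - (PI / 2) < snd (Cmult (RtoC p) (Clog_rhp w)) < PI / 2.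
Proof.
intros Hp. simpl. rewrite Rmult_0_l, Rplus_0_r.
assert (Hb := atan_bound (snd w / fst w)). assert (HPI := PI_RGT_0).
split; nra.
Qed.

Lemma Clog_eq_Clog_rhp (w : C) : 0 < fst w -> Clog w = Clog_rhp w.
Proof.
intros Hx. destruct w as [x y]; simpl in Hx. unfold Clog, Clog_rhp, Carg, Cmod, Re, Im; simpl.
destruct (Rlt_dec 0 x) as [_|]; [|lra].
assert (HN : 0 < x * (x * 1) + y * (y * 1)) by nra.
f_equal. rewrite <- Rpower_sqrt by exact HN. unfold Rpower. rewrite ln_exp. field.
Qed.

Lemma Cpow_rhp (w : C) (p : R) : 0 < fst w -> Defs.Cpow w p = Cexp (Cmult (RtoC p) (Clog_rhp w)).
Proof.
intros Hx. unfold Defs.Cpow. destruct Req_EM_T as [E|_].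
- apply Cmod_eq_0 in E. rewrite E in Hx. simpl in Hx. lra.
- rewrite Clog_eq_Clog_rhp by exact Hx. reflexivity.
Qed.

Lemma scal_RtoC (r : R) (w : C) : scal (V := C_R_NormedModule) r w = Cmult (RtoC r) w.
Proof. apply injective_projections; cbn; unfold mult; simpl; ring. Qed.

Lemma fst_Cmult_RtoC (r : R) (w : C) : fst (Cmult (RtoC r) w) = r * fst w.
Proof. simpl; ring. Qed.

Lemma is_derive_RC_ray (z : C) (s : R) : is_derive_RC (fun s => Cmult (RtoC s) z) s z.
Proof.
refine (is_derive_RC_ext _ _ _ _ _ (fun _ => eq_refl)
  (is_derive_RC_mult _ _ s _ _ (is_derive_RC_RtoC _ s _ (is_derive_id s)) (is_derive_RC_const z s)) _).
apply injective_projections; simpl; unfold one; simpl; ring.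
Qed.

Lemma Cmod_ray (t : R) (z : C) : 0 <= t -> Cmod (Cmult (RtoC t) z) = t * Cmod z.
Proof. intros Ht. rewrite Cmod_mult, Cmod_R, Rabs_pos_eq by exact Ht. reflexivity. Qed.

Lemma locally_ray (z : C) : inD z -> locally 1 (fun t => 0 < t /\ t * Cmod z < 1).
Proof.
unfold inD. intros Hz. assert (Hc := Cmod_ge_0 z).
assert (Hd : 0 < (1 - Cmod z) / 2) by lra.
exists (mkposreal _ Hd). intros t Ht.
change (Rabs (t - 1) < (1 - Cmod z) / 2) in Ht. apply Rabs_def2 in Ht. nra.
Qed.

Definition circle (r theta : R) : C := Cmult (RtoC r) (Cexp ((0%R, theta) : C)).

Lemma is_derive_RC_circle (r theta : R) :
  is_derive_RC (circle r) theta (Cmult (circle r theta) ((0%R, 1%R) : C)).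
Proof.
assert (Hi : is_derive_RC (fun t => ((0%R, t) : C)) theta ((0%R, 1%R) : C)).
{ split; simpl.
  - apply (is_derive_const (K := R_AbsRing) (V := R_NormedModule)).
  - apply (is_derive_id (K := R_AbsRing)). }
refine (is_derive_RC_ext _ _ _ _ _ (fun _ => eq_refl)
  (is_derive_RC_mult _ _ theta _ _ (is_derive_RC_const (RtoC r) theta) (is_derive_RC_Cexp _ theta _ Hi)) _).
unfold circle. ring.
Qed.

Lemma Cmod_circle (r theta : R) : 0 <= r -> Cmod (circle r theta) = r.
Proof.
intros Hr. unfold circle. rewrite Cmod_ray by exact Hr.
unfold Cmod, Cexp, Re, Im; simpl. rewrite exp_0.
replace (1 * cos theta * (1 * cos theta * 1) + 1 * sin theta * (1 * sin theta * 1))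
  with (Rsqr (sin theta) + Rsqr (cos theta)) by (unfold Rsqr; ring).
rewrite sin2_cos2, sqrt_1. ring.
Qed.

Lemma circle_neq0 (r theta : R) : 0 < r -> circle r theta <> 0%C.
Proof.
intros Hr E. assert (H := Cmod_circle r theta (Rlt_le _ _ Hr)).
rewrite E, Cmod_0 in H. lra.
Qed.

Lemma inD_circle (r theta : R) : 0 <= r < 1 -> inD (circle r theta).
Proof. intros Hr. unfold inD. rewrite Cmod_circle; lra. Qed.

Lemma Rpower_1_l (p : R) : Rpower 1 p = 1.
Proof. unfold Rpower. rewrite ln_1, Rmult_0_r. apply exp_0. Qed.

Lemma rpow_1 (p : R) : rpow 1 p = 1.
Proof. unfold rpow. destruct Rlt_dec; [apply Rpower_1_l | lra]. Qed.

Lemma rpow_mult (t y p : R) : 0 < t -> rpow (t * y) p = Rpower t p * rpow y p.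
Proof.
intros Ht. unfold rpow.
destruct (Rlt_dec 0 y) as [Hy|Hy]; destruct Rlt_dec as [Hty|Hty]; try nra.
symmetry; apply Rpower_mult_distr; lra.
Qed.

Lemma continuous_rpow (p x : R) : 0 < p -> continuous (fun s => rpow s p) x.
Proof.
intros Hp. destruct (Rtotal_order x 0) as [Hx|[->|Hx]].
- apply (continuous_ext_loc _ (fun _ => 0)); [|apply continuous_const].
  assert (Hx' : 0 < - x) by lra. exists (mkposreal _ Hx'). intros y Hy.
  change (Rabs (y - x) < - x) in Hy. apply Rabs_def2 in Hy. unfold rpow. destruct Rlt_dec; [lra|reflexivity].
- apply filterlim_locally. intros eps.
  assert (Hd : 0 < Rpower eps (/ p)) by apply exp_pos.
  exists (mkposreal _ Hd). intros y Hy.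
  change (Rabs (y - 0) < Rpower eps (/ p)) in Hy. apply Rabs_def2 in Hy.
  change (Rabs (rpow y p - rpow 0 p) < eps).
  unfold rpow at 2. destruct (Rlt_dec 0 0); [lra|]. rewrite Rminus_0_r.
  unfold rpow. destruct (Rlt_dec 0 y) as [Hy0|Hy0].
  + rewrite Rabs_pos_eq by (left; apply exp_pos).
    rewrite <- (Rpower_1 eps) by apply cond_pos. rewrite <- (Rinv_l p) by lra.
    rewrite <- Rpower_mult. apply Rlt_Rpower_l; lra.
  + rewrite Rabs_R0. apply cond_pos.
- apply (continuous_ext_loc _ (fun s => Rpower s p)).
  + exists (mkposreal _ Hx). intros y Hy.
    change (Rabs (y - x) < x) in Hy. apply Rabs_def2 in Hy.
    unfold rpow. destruct Rlt_dec; [reflexivity|lra].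
  + apply (ex_derive_continuous (V := R_NormedModule)).
    exists (p * Rpower x (p - 1)). apply is_derive_Reals, derivable_pt_lim_power, Hx.
Qed.

Section BazilevicKernel.

Variables (alpha : R) (h : C -> C).
Hypothesis alpha_gt_1 : 1 < alpha.
Hypothesis h_analytic : analytic_D h.

Definition Bkernel (z : C) (s : R) : C :=
  Cmult (RtoC (rpow s (alpha - 1))) (h (Cmult (RtoC s) z)).

Lemma Bazilevic_g_Bkernel (z : C) :
  Bazilevic_g alpha h z = Cmult (RtoC alpha) (RInt (V := C_R_CompleteNormedModule) (Bkernel z) 0 1).
Proof. reflexivity. Qed.

Lemma continuous_Bkernel (z : C) (s : R) :
  inD (Cmult (RtoC s) z) -> continuous (U := C_R_NormedModule) (Bkernel z) s.
Proof.
intros Hin. destruct (h_analytic _ Hin) as [D HD].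
assert (Hh := is_derive_RC_comp h _ s _ D HD (is_derive_RC_ray z s)).
apply is_derive_RC_filterdiff in Hh.
apply (continuous_ext (fun s => scal (rpow s (alpha - 1)) (h (Cmult (RtoC s) z)))).
- intros y. apply scal_RtoC.
- apply (continuous_scal (K := R_AbsRing) (V := C_R_NormedModule)).
  + apply continuous_rpow. lra.
  + apply (ex_derive_continuous (V := C_R_NormedModule)). eexists; exact Hh.
Qed.

Lemma ex_RInt_Bkernel (z : C) (T : R) :
  0 <= T -> T * Cmod z < 1 -> ex_RInt (V := C_R_NormedModule) (Bkernel z) 0 T.
Proof.
intros HT HTz. apply (ex_RInt_continuous (V := C_R_CompleteNormedModule)).
intros s Hs. rewrite Rmin_left, Rmax_right in Hs by lra.
apply continuous_Bkernel. unfold inD. rewrite Cmod_ray by lra.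
assert (Hz := Cmod_ge_0 z). nra.
Qed.

Lemma RInt_Bkernel_scale (z : C) (t : R) : 0 < t -> t * Cmod z < 1 ->
  RInt (V := C_R_CompleteNormedModule) (Bkernel z) 0 t =
  Cmult (RtoC (Rpower t alpha)) (RInt (V := C_R_CompleteNormedModule) (Bkernel (Cmult (RtoC t) z)) 0 1).
Proof.
intros Ht Htz.
assert (Htz' : 1 * Cmod (Cmult (RtoC t) z) < 1) by (rewrite Cmod_ray; lra).
transitivity (RInt (V := C_R_CompleteNormedModule) (fun y => scal t (Bkernel z (t * y + 0))) 0 1).
{ rewrite (RInt_comp_lin (V := C_R_CompleteNormedModule)); [f_equal; ring|].
  rewrite Rmult_0_r, Rmult_1_r, !Rplus_0_r. apply ex_RInt_Bkernel; lra. }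
transitivity (RInt (V := C_R_CompleteNormedModule)
  (fun y => scal (Rpower t alpha) (Bkernel (Cmult (RtoC t) z) y)) 0 1).
{ apply RInt_ext. intros y _. rewrite !scal_RtoC. unfold Bkernel.
  rewrite Rplus_0_r, rpow_mult by exact Ht.
  replace (Rpower t alpha) with (t * Rpower t (alpha - 1)).
  2:{ rewrite <- (Rpower_1 t) at 1 by exact Ht. rewrite <- Rpower_plus. f_equal. ring. }
  replace (Cmult (RtoC y) (Cmult (RtoC t) z)) with (Cmult (RtoC (t * y)) z)
    by (rewrite RtoC_mult; ring).
  apply injective_projections; simpl; ring. }
rewrite (RInt_scal (V := C_R_CompleteNormedModule)); [apply scal_RtoC | apply ex_RInt_Bkernel; lra].
Qed.

Lemma Bazilevic_g_ray (z : C) (t : R) : 0 < t -> t * Cmod z < 1 ->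
  Cmult (RtoC (Rpower t alpha)) (Bazilevic_g alpha h (Cmult (RtoC t) z)) =
  Cmult (RtoC alpha) (RInt (V := C_R_CompleteNormedModule) (Bkernel z) 0 t).
Proof.
intros Ht Htz. rewrite Bazilevic_g_Bkernel, (RInt_Bkernel_scale z t) by assumption.
ring.
Qed.

Lemma is_derive_RInt_Bkernel (z : C) : inD z ->
  is_derive (V := C_R_NormedModule) (fun t => RInt (V := C_R_CompleteNormedModule) (Bkernel z) 0 t) 1 (h z).
Proof.
intros Hz.
replace (h z) with (Bkernel z 1).
2:{ unfold Bkernel. rewrite rpow_1, !Cmult_1_l. reflexivity. }
apply (is_derive_RInt _ _ 0).
- apply (filter_imp _ _ (fun t Ht => RInt_correct (V := C_R_CompleteNormedModule) _ _ _
    (ex_RInt_Bkernel z t (Rlt_le _ _ (proj1 Ht)) (proj2 Ht)))).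
  apply locally_ray, Hz.
- apply continuous_Bkernel. unfold inD in *. rewrite Cmod_ray; lra.
Qed.

Lemma is_derive_RC_Bazilevic_g_ray (z : C) : inD z ->
  is_derive_RC (fun t => Cmult (RtoC (Rpower t alpha)) (Bazilevic_g alpha h (Cmult (RtoC t) z))) 1
    (Cmult (RtoC alpha) (h z)).
Proof.
intros Hz.
apply (is_derive_RC_ext_loc
  (fun t => Cmult (RtoC alpha) (RInt (V := C_R_CompleteNormedModule) (Bkernel z) 0 t))).
- apply (filter_imp _ _ (fun t Ht => eq_sym (Bazilevic_g_ray z t (proj1 Ht) (proj2 Ht)))).
  apply locally_ray, Hz.
- refine (is_derive_RC_ext _ _ _ _ _ (fun _ => eq_refl) (is_derive_RC_mult _ _ 1 _ _
    (is_derive_RC_const (RtoC alpha) 1)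
    (proj2 (is_derive_RC_filterdiff _ _ _) (is_derive_RInt_Bkernel z Hz))) _).
  ring.
Qed.

Hypothesis h_Re_pos : forall z, inD z -> 0 < Re (h z).

Lemma Re_Bazilevic_g_pos (z : C) : inD z -> 0 < fst (Bazilevic_g alpha h z).
Proof.
intros Hz. unfold inD in Hz. assert (Hc := Cmod_ge_0 z).
rewrite Bazilevic_g_Bkernel, fst_Cmult_RtoC.
apply Rmult_lt_0_compat; [lra|].
assert (E : RInt (fun s => fst (Bkernel z s)) 0 1 =
           fst (RInt (V := C_R_CompleteNormedModule) (Bkernel z) 0 1)).
{ apply is_RInt_unique, (is_RInt_fct_extend_fst (U := R_NormedModule) (V := R_NormedModule)).
  apply (RInt_correct (V := C_R_CompleteNormedModule)), ex_RInt_Bkernel; lra. }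
rewrite <- E.
apply RInt_gt_0; [lra| |].
- intros s Hs. unfold Bkernel. rewrite fst_Cmult_RtoC.
  apply Rmult_lt_0_compat.
  + unfold rpow. destruct Rlt_dec; [apply exp_pos | lra].
  + apply h_Re_pos. unfold inD. rewrite Cmod_ray; nra.
- intros s Hs. apply (continuous_comp (Bkernel z) fst).
  + apply continuous_Bkernel. unfold inD. rewrite Cmod_ray; nra.
  + destruct (Bkernel z s). apply continuous_fst.
Qed.

End BazilevicKernel.

(* A primitive of [Re P[alpha, f]] along the circle of radius [r]. *)
Definition Pprimitive (alpha : R) (h : C -> C) (r theta : R) : R :=
  alpha * theta + snd (Clog_rhp (h (circle r theta))).

Lemma Pprimitive_increment (alpha : R) (h : C -> C) (r theta1 theta2 : R) :
  0 < alpha -> theta1 < theta2 -> Pprimitive alpha h r theta2 - Pprimitive alpha h r theta1 > - PI.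
Proof.
intros Ha Ht. unfold Pprimitive, Clog_rhp; simpl.
assert (H1 := atan_bound (snd (h (circle r theta1)) / fst (h (circle r theta1)))).
assert (H2 := atan_bound (snd (h (circle r theta2)) / fst (h (circle r theta2)))).
nra.
Qed.

Section BazilevicFunction.

Variables (alpha : R) (f f' f'' h : C -> C).
Hypothesis alpha_gt_1 : 1 < alpha.
Hypothesis h_analytic : analytic_D h.
Hypothesis h_Re_pos : forall z, inD z -> 0 < Re (h z).
Hypothesis f_repr : forall z, inD z -> f z = Cmult z (Defs.Cpow (Bazilevic_g alpha h z) (/ alpha)).
Hypothesis f_derive : forall z, inD z -> is_derive (K := C_AbsRing) (V := C_NormedModule) f z (f' z).
Hypothesis f'_derive : forall z, inD z -> is_derive (K := C_AbsRing) (V := C_NormedModule) f' z (f'' z).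

Let inv_alpha_bound : 0 < / alpha <= 1.
Proof. split; [apply Rinv_0_lt_compat; lra | rewrite <- Rinv_1; apply Rinv_le_contravar; lra]. Qed.

Lemma quotient_Cexp (z : C) : inD z -> z <> 0%C ->
  Cdiv (f z) z = Cexp (Cmult (RtoC (/ alpha)) (Clog_rhp (Bazilevic_g alpha h z))).
Proof.
intros Hz Hz0. rewrite f_repr, Cpow_rhp by (try apply Re_Bazilevic_g_pos; assumption).
field. exact Hz0.
Qed.

Lemma Re_quotient_pos (z : C) : inD z -> z <> 0%C -> 0 < fst (Cdiv (f z) z).
Proof.
intros Hz Hz0. rewrite quotient_Cexp by assumption.
apply Rmult_lt_0_compat; [apply exp_pos|].
apply cos_gt_0; apply Im_scal_Clog_rhp_bound, inv_alpha_bound.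
Qed.

Lemma f_neq0 (z : C) : inD z -> z <> 0%C -> f z <> 0%C.
Proof.
intros Hz Hz0 E. apply (Cexp_neq0 (Cmult (RtoC (/ alpha)) (Clog_rhp (Bazilevic_g alpha h z)))).
rewrite <- quotient_Cexp, E by assumption. field. exact Hz0.
Qed.

Lemma Bazilevic_g_quotient (z : C) : inD z -> z <> 0%C ->
  Bazilevic_g alpha h z = Cexp (Cmult (RtoC alpha) (Clog_rhp (Cdiv (f z) z))).
Proof.
intros Hz Hz0.
rewrite quotient_Cexp, Clog_rhp_Cexp by (try apply Im_scal_Clog_rhp_bound, inv_alpha_bound; assumption).
rewrite Cmult_assoc, <- RtoC_mult, Rinv_r, Cmult_1_l by lra.
symmetry. apply Cexp_Clog_rhp, Re_Bazilevic_g_pos; assumption.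
Qed.

Lemma is_derive_RC_Clog_quotient (u : R -> C) (t : R) (du : C) :
  is_derive_RC u t du -> inD (u t) -> u t <> 0%C ->
  is_derive_RC (fun s => Clog_rhp (Cdiv (f (u s)) (u s))) t
    (Cmult du (Cminus (Cdiv (f' (u t)) (f (u t))) (Cinv (u t)))).
Proof.
intros Hu Hin H0.
refine (is_derive_RC_ext _ _ _ _ _ (fun _ => eq_refl)
  (is_derive_RC_Clog_rhp _ t _ (Re_quotient_pos _ Hin H0)
    (is_derive_RC_mult _ _ t _ _ (is_derive_RC_comp f u t du _ (f_derive _ Hin) Hu)
      (is_derive_RC_Cinv u t du H0 Hu))) _).
assert (Hf0 := f_neq0 _ Hin H0). unfold Cdiv. field. split; assumption.
Qed.

(* Differentiating [t^alpha g(t z) = (f(t z)/z)^alpha] at [t = 1] gives [h = f' (f/z)^(alpha-1)]. *)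
Lemma h_eq_f'_quotient (z : C) : inD z -> z <> 0%C ->
  h z = Cmult (f' z) (Cexp (Cmult (RtoC (alpha - 1)) (Clog_rhp (Cdiv (f z) z)))).
Proof.
intros Hz Hz0.
assert (Hpow : is_derive (fun t => Rpower t alpha) 1 (alpha * Rpower 1 (alpha - 1)))
  by (apply is_derive_Reals, derivable_pt_lim_power; lra).
assert (Hz1 : inD (Cmult (RtoC 1) z)) by (rewrite Cmult_1_l; exact Hz).
assert (Hz10 : Cmult (RtoC 1) z <> 0%C) by (rewrite Cmult_1_l; exact Hz0).
assert (Hf0 := f_neq0 z Hz Hz0).
assert (Hrhs : is_derive_RC (fun t => Cmult (RtoC (Rpower t alpha))
    (Cexp (Cmult (RtoC alpha) (Clog_rhp (Cdiv (f (Cmult (RtoC t) z)) (Cmult (RtoC t) z)))))) 1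
    (Cmult (RtoC alpha) (Cmult (f' z) (Cexp (Cmult (RtoC (alpha - 1)) (Clog_rhp (Cdiv (f z) z))))))).
{ refine (is_derive_RC_ext _ _ _ _ _ (fun _ => eq_refl) (is_derive_RC_mult _ _ 1 _ _
    (is_derive_RC_RtoC _ _ _ Hpow) (is_derive_RC_Cexp _ 1 _ (is_derive_RC_mult _ _ 1 _ _
      (is_derive_RC_const (RtoC alpha) 1)
      (is_derive_RC_Clog_quotient _ 1 _ (is_derive_RC_ray z 1) Hz1 Hz10)))) _).
  rewrite !Cmult_1_l, !Rpower_1_l, Rmult_1_r, Cexp_scal_Clog_rhp_pred by (apply Re_quotient_pos; assumption).
  unfold Cdiv. field. split; assumption. }
apply (is_derive_RC_ext_loc _
  (fun t => Cmult (RtoC (Rpower t alpha)) (Bazilevic_g alpha h (Cmult (RtoC t) z)))) in Hrhs.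
- assert (Halpha : RtoC alpha <> 0%C) by (intros E; injection E; lra).
  transitivity (Cmult (Cinv (RtoC alpha)) (Cmult (RtoC alpha) (h z))); [field; exact Halpha|].
  rewrite (is_derive_RC_unique _ _ _ _
    (is_derive_RC_Bazilevic_g_ray alpha h alpha_gt_1 h_analytic z Hz) Hrhs).
  field. exact Halpha.
- generalize (locally_ray z Hz). apply filter_imp. intros t [Ht Htz]. f_equal.
  symmetry. apply Bazilevic_g_quotient.
  + unfold inD. rewrite Cmod_ray; lra.
  + apply Cmult_neq_0; [intros E; injection E; lra | exact Hz0].
Qed.

Lemma is_derive_RC_h_circle (r theta : R) : 0 < r < 1 ->
  is_derive_RC (fun t => h (circle r t)) theta
    (Cmult (h (circle r theta))
      (Cmult ((0%R, 1%R) : C) (Cminus (Pfun alpha f f' f'' (circle r theta)) (RtoC alpha)))).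
Proof.
intros Hr.
assert (Hin : forall t, inD (circle r t)) by (intros t; apply inD_circle; lra).
assert (H0 : forall t, circle r t <> 0%C) by (intros t; apply circle_neq0; lra).
assert (Hh := fun t => h_eq_f'_quotient _ (Hin t) (H0 t)).
refine (is_derive_RC_ext _ _ _ _ _ (fun t => eq_sym (Hh t)) (is_derive_RC_mult _ _ theta _ _
  (is_derive_RC_comp f' _ theta _ _ (f'_derive _ (Hin theta)) (is_derive_RC_circle r theta))
  (is_derive_RC_Cexp _ theta _ (is_derive_RC_mult _ _ theta _ _ (is_derive_RC_const _ theta)
    (is_derive_RC_Clog_quotient _ theta _ (is_derive_RC_circle r theta) (Hin theta) (H0 theta))))) _).
rewrite Hh. set (z := circle r theta).
set (X := Cexp (Cmult (RtoC (alpha - 1)) (Clog_rhp (Cdiv (f z) z)))).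
assert (Hf0 := f_neq0 z (Hin theta) (H0 theta)).
assert (Hf'X : Cmult (f' z) X <> 0%C).
{ apply Re_pos_neq0. unfold X, z. rewrite <- Hh. apply h_Re_pos, Hin. }
assert (Hf'0 : f' z <> 0%C) by (intros E; apply Hf'X; rewrite E; ring).
unfold Pfun, Cdiv, Cminus. rewrite RtoC_minus. field. repeat split; [exact Hf0 | exact Hf'0 | apply H0].
Qed.

Lemma is_derive_Pprimitive (r theta : R) : 0 < r < 1 ->
  is_derive (Pprimitive alpha h r) theta (Re (Pfun alpha f f' f'' (circle r theta))).
Proof.
intros Hr.
assert (Hin : inD (circle r theta)) by (apply inD_circle; lra).
assert (Hh0 := Re_pos_neq0 _ (h_Re_pos _ Hin)).
destruct (is_derive_RC_Clog_rhp _ theta _ (h_Re_pos _ Hin) (is_derive_RC_h_circle r theta Hr)) as [_ Harg].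
refine (is_derive_val _ _ _ _ (is_derive_plus _ _ theta _ _
  (is_derive_scal (fun t => t) theta alpha _ (is_derive_id (K := R_AbsRing) theta)) Harg) _).
rewrite Cmult_comm, Cmult_assoc, Cinv_l, Cmult_1_l by exact Hh0.
unfold Re. simpl. unfold plus, one; simpl. ring.
Qed.

End BazilevicFunction.

Theorem mainTheorem3 (alpha : R) (f f' f'' : C -> C) :
  1 < alpha ->
  classB1 alpha f ->
  (forall z, inD z -> is_derive (K := C_AbsRing) (V := C_NormedModule) f z (f' z)) ->
  (forall z, inD z -> is_derive (K := C_AbsRing) (V := C_NormedModule) f' z (f'' z)) ->
  forall r theta1 theta2 : R, 0 < r < 1 -> theta1 < theta2 ->
  RInt (fun theta : R =>
          Re (Pfun alpha f f' f'' (Cmult (RtoC r) (Cexp ((0%R, theta) : C)))))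
       theta1 theta2 > - PI.
Proof.
intros Ha [_ [h [[Hh_an [_ Hh_pos]] Hrep]]] Hf' Hf'' r theta1 theta2 Hr Ht.
change (RInt (fun theta => Re (Pfun alpha f f' f'' (circle r theta))) theta1 theta2 > - PI).
destruct (classic (ex_RInt (fun theta => Re (Pfun alpha f f' f'' (circle r theta))) theta1 theta2))
  as [[I HI]|HnI].
- rewrite (is_RInt_unique _ _ _ _ HI).
  rewrite (is_RInt_antiderivative (Pprimitive alpha h r) _ theta1 theta2
    (fun theta _ => is_derive_Pprimitive alpha f f' f'' h Ha Hh_an Hh_pos Hrep Hf' Hf'' r theta Hr)
    I Ht HI).
  apply Pprimitive_increment; lra.
- rewrite RInt_not_ex by exact HnI. assert (HPI := PI_RGT_0). lra.
Qed.
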